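(* Let $F$ be a field of characteristic $3$ and let $L=psl_3(F)$. Then no maximal subalgebra of $L$ is semi-modular in $L$.
   Context: $psl_3(F)=sl_3(F)/F I$ (in characteristic 3 the identity matrix $I$ lies in $sl_3(F)$ and spans its centre). For subalgebras $U,B$ of a Lie algebra $L$, $\langle U,B\rangle$ denotes the subalgebra generated by $U\cup B$. A subalgebra $B$ covers a subalgebra $A$ if $A$ is a maximal subalgebra of $B$. $U$ is upper modular (um) in $L$ if whenever $B$ is a subalgebra of $L$ which covers $U\cap B$, then $\langle U,B\rangle$ covers $U$; $U$ is lower modular (lm) in $L$ if whenever $B$ is a subalgebra of $L$ such that $\langle U,B\rangle$ covers $U$, then $B$ covers $U\cap B$; $U$ is semi-modular (sm) in $L$ if it is both um and lm in $L$. *)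

From HB Require Import structures.
From mathcomp Require Import all_boot all_order all_algebra.
Set Implicit Arguments. Unset Strict Implicit. Unset Printing Implicit Defensive.
Import GRing.Theory.
Local Open Scope ring_scope.

Section LieLattice.
Variables (F : fieldType) (V : vectType F) (br : V -> V -> V).

Definition subalg (U : {vspace V}) : Prop :=
  forall x y, x \in U -> y \in U -> br x y \in U.

Definition generated (A S : {vspace V}) : Prop :=
  [/\ subalg S, (A <= S)%VS &
      forall T, subalg T -> (A <= T)%VS -> (S <= T)%VS].

Definition maximal_in (A B : {vspace V}) : Prop :=
  [/\ subalg A, subalg B, (A <= B)%VS, A != B &
      forall C, subalg C -> (A <= C)%VS -> (C <= B)%VS -> C = A \/ C = B].

Definition covers (B A : {vspace V}) : Prop := maximal_in A B.

(* <U, B> (the subalgebra generated by U \cup B) covers U;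
   the generated subalgebra exists and is unique, so "every S generated by
   U + B" is just "<U,B>" *)
Definition join_covers (U B : {vspace V}) : Prop :=
  forall S, generated (U + B)%VS S -> covers S U.

Definition upper_modular (U : {vspace V}) : Prop :=
  forall B, subalg B -> covers B (U :&: B)%VS -> join_covers U B.

Definition lower_modular (U : {vspace V}) : Prop :=
  forall B, subalg B -> join_covers U B -> covers B (U :&: B)%VS.

Definition semi_modular (U : {vspace V}) : Prop :=
  upper_modular U /\ lower_modular U.

End LieLattice.

(* Model: psl_3(F) = sl_3(F)/F I is realised (for char F = 3, where I \in sl_3)
   by the canonical coset representatives  x - x_{11} I, i.e. the subspace
   { x in M_3(F) | tr x = 0, x_{11} = 0 }  (index 1 = middle row/column),
   with bracket  [x,y] := c - c_{11} I  where  c = xy - yx. *)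
Section PSL3.
Variable F : fieldType.

Definition mid : 'I_3 := inord 1.

Definition psl3_space : {vspace 'M[F]_3} :=
  (lker (linfun (fun A : 'M[F]_3 => (\tr A : F^o))) :&:
   lker (linfun (fun A : 'M[F]_3 => (A mid mid : F^o))))%VS.

Definition psl3 : vectType F := subvs_of psl3_space.

Definition comm3 (x y : 'M[F]_3) : 'M[F]_3 := x * y - y * x.

Definition psl3_br (x y : psl3) : psl3 :=
  let c := comm3 (vsval x) (vsval y) in
  vsproj psl3_space (c - c mid mid *: 1).

End PSL3.

From HB Require Import structures.
From mathcomp Require Import all_boot all_order all_algebra.
Set Implicit Arguments. Unset Strict Implicit. Unset Printing Implicit Defensive.
Import GRing.Theory.
Local Open Scope ring_scope.

(* Lattice part (any alternating bilinear bracket): if M is a maximal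
   subalgebra, lower modular, and x lies outside M, then M meets every
   two-dimensional subalgebra <x, y> nontrivially, because <M, <x, y>> is the
   whole algebra and so M :&: <x, y> must be maximal in <x, y>.  Combined with
   eigenvector bookkeeping for ad h this gives two consequences: if h is in M,
   then a root vector x lies in M as soon as two partners y, z of the opposite
   weight commute with x and [y, z] is a multiple of x; if h is outside M,
   then M contains a translate z + c h of every root vector z.

   psl_3 part: with h = diag(1, 0, -1) and the off-diagonal matrix units a_i
   (weight 1) and b_i (weight -1, as 2 = -1 in characteristic 3), the first
   consequence forces all a_i, then all b_i into M, so M is everything; the
   second yields b_3, a_3 and then h = -[a_3, b_3] in M.  Both contradict
   maximality. *)

Section SubalgebraLattice.
Variables (F : fieldType) (V : vectType F) (br : V -> V -> V).

Hypothesis brDZl : forall a x y z, br (a *: x + y) z = a *: br x z + br y z.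
Hypothesis brC : forall x y, br y x = - br x y.
Hypothesis br_alt : forall x, br x x = 0.

Lemma brDl x y z : br (x + y) z = br x z + br y z.
Proof. by have := brDZl 1 x y z; rewrite !scale1r. Qed.

Lemma brZl a x z : br (a *: x) z = a *: br x z.
Proof.
have br0l : br 0 z = 0 by apply/(addrI (br 0 z)); rewrite -brDl !addr0.
by rewrite -[a *: x]addr0 brDZl br0l addr0.
Qed.

Lemma brDr x y z : br z (x + y) = br z x + br z y.
Proof. by rewrite brC brDl opprD -!brC. Qed.

Lemma brZr a x z : br z (a *: x) = a *: br z x.
Proof. by rewrite brC brZl -scalerN -brC. Qed.

Lemma mem_plane_l (x y : V) : x \in (<[x]> + <[y]>)%VS.
Proof. exact: subvP (addvSl _ _) _ (memv_line x). Qed.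

Lemma mem_plane_r (x y : V) : y \in (<[x]> + <[y]>)%VS.
Proof. exact: subvP (addvSr _ _) _ (memv_line y). Qed.

Lemma subalg_line x : subalg br <[x]>%VS.
Proof.
by move=> u w /vlineP[a ->] /vlineP[b ->]; rewrite brZl brZr br_alt !scaler0 mem0v.
Qed.

Lemma subalg_plane x y :
  br x y \in (<[x]> + <[y]>)%VS -> subalg br (<[x]> + <[y]>)%VS.
Proof.
move=> xy u w /memv_addP[_ /vlineP[a ->] [_ /vlineP[b ->] ->]].
move=> /memv_addP[_ /vlineP[c ->] [_ /vlineP[d ->] ->]].
have yx : br y x \in (<[x]> + <[y]>)%VS by rewrite brC rpredN.
by rewrite !(brDl, brDr, brZl, brZr) !br_alt !scaler0 add0r addr0 rpredD ?rpredZ.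
Qed.

Lemma maximal_join_covers M B :
  maximal_in br M fullv -> ~~ (B <= M)%VS -> join_covers br M B.
Proof.
move=> maxM BM S [subS MBS _]; have [_ _ _ _ maxS] := maxM.
have [eSM | -> //] := maxS S subS (subv_trans (addvSl M B) MBS) (subvf S).
by move: BM; rewrite -eSM (subv_trans (addvSr M B) MBS).
Qed.

Lemma lower_modular_meets_plane M x y :
  maximal_in br M fullv -> lower_modular br M -> x \notin M -> y \notin <[x]>%VS ->
  br x y \in (<[x]> + <[y]>)%VS ->
  exists a b, a *: x + b *: y \in M /\ a *: x + b *: y != 0.
Proof.
move=> maxM lmM xM yx xy; set B := (<[x]> + <[y]>)%VS.
have BM : ~~ (B <= M)%VS by apply: contra xM => /subvP; apply; apply: mem_plane_l.
have [_ _ _ _ maxMB] := lmM B (subalg_plane xy) (maximal_join_covers maxM BM).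
have MB0 : (M :&: B)%VS != 0%VS.
  apply: contraNneq yx => MB0.
  have MBx : ((M :&: B) <= <[x]>)%VS by rewrite MB0 sub0v.
  have [eqx | ->] := maxMB _ (@subalg_line x) MBx (addvSl _ _).
    by move: xM; have := memv_line x; rewrite eqx memv_cap => /andP[->].
  exact: mem_plane_r.
have /memv_capP[vM] := memv_pick (M :&: B)%VS.
case/memv_addP=> _ /vlineP[a ->] [_ /vlineP[b ->] ev].
by exists a, b; rewrite -ev vpick0.
Qed.

Lemma eigen_component M h x y (lam mu a b : F) :
  subalg br M -> h \in M -> br h x = lam *: x -> br h y = mu *: y -> lam != mu ->
  a *: x + b *: y \in M -> a *: x \in M.
Proof.
move=> subM hM hx hy lam_mu vM.
have : mu *: (a *: x + b *: y) - br h (a *: x + b *: y) \in M.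
  by rewrite rpredB ?rpredZ ?subM.
rewrite brDr !brZr hx hy scalerDr !scalerA opprD addrACA -!scalerBl (mulrC b) subrr.
rewrite scale0r addr0 (mulrC a lam) -mulrBl -scalerA rpredZeq subr_eq0 eq_sym.
by rewrite (negPf lam_mu).
Qed.

Lemma eigen_not_collinear h x y (lam mu : F) :
  br h x = lam *: x -> br h y = mu *: y -> lam != mu -> y != 0 -> y \notin <[x]>%VS.
Proof.
move=> hx hy lam_mu y0; apply/negP => /vlineP[k eyx].
have : (mu - lam) *: y = 0.
  by rewrite scalerBl -hy {1}eyx brZr hx scalerA mulrC -scalerA -eyx subrr.
by apply/eqP; rewrite scaler_eq0 subr_eq0 eq_sym (negPf lam_mu) (negPf y0).
Qed.

Lemma lower_modular_partner M h x y (lam mu : F) :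
  maximal_in br M fullv -> lower_modular br M -> h \in M -> x \notin M ->
  br h x = lam *: x -> br h y = mu *: y -> lam != mu -> y != 0 ->
  br x y \in (<[x]> + <[y]>)%VS -> y \in M.
Proof.
move=> maxM lmM hM xM hx hy lam_mu y0 xy; have [subM _ _ _ _] := maxM.
have yx := eigen_not_collinear hx hy lam_mu y0.
have [a [b [vM v0]]] := lower_modular_meets_plane maxM lmM xM yx xy.
have := eigen_component subM hM hx hy lam_mu vM.
rewrite rpredZeq (negPf xM) orbF => /eqP a0.
move: vM v0; rewrite a0 scale0r add0r rpredZeq => /orP[/eqP-> | //].
by rewrite scale0r eqxx.
Qed.

Lemma lower_modular_shift M h z (mu : F) :
  maximal_in br M fullv -> lower_modular br M -> h \notin M ->
  br h z = mu *: z -> mu != 0 -> z != 0 -> exists c, z + c *: h \in M.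
Proof.
move=> maxM lmM hM hz mu0 z0.
have hh : br h h = 0 *: h by rewrite br_alt scale0r.
have zh : z \notin <[h]>%VS by apply: eigen_not_collinear hh hz _ z0; rewrite eq_sym.
have hzB : br h z \in (<[h]> + <[z]>)%VS by rewrite hz rpredZ // mem_plane_r.
have [a [b [vM v0]]] := lower_modular_meets_plane maxM lmM hM zh hzB.
have [b0 | b0] := eqVneq b 0.
  move: vM v0; rewrite b0 scale0r addr0 rpredZeq (negPf hM) orbF => /eqP->.
  by rewrite scale0r eqxx.
exists (b^-1 * a); rewrite -scalerA -[z](scalerK b0) -scalerDr addrC rpredZ //.
Qed.

(* In a subalgebra M, translates x + c h and y + d h of eigenvectors with a
   common eigenvalue e yield [x, y] in M, since
   [x, y] = [x + c h, y + d h] + e (d (x + c h) - c (y + d h)). *)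
Lemma same_weight_bracket M h x y (e c d : F) :
  subalg br M -> br h x = e *: x -> br h y = e *: y ->
  x + c *: h \in M -> y + d *: h \in M -> br x y \in M.
Proof.
move=> subM hx hy uM wM; set u := x + c *: h in uM; set w := y + d *: h in wM.
have comb : d *: u - c *: w = d *: x - c *: y.
  by rewrite !scalerDr !scalerA mulrC opprD addrACA subrr addr0.
have buw : br u w = br x y - e *: (d *: x - c *: y).
  rewrite /u /w !(brDl, brDr, brZl, brZr) br_alt !scaler0 addr0 (brC h x) hx hy.
  rewrite scalerN !scalerA scalerBr !scalerA (mulrC d) (mulrC c) opprB.
  by rewrite -addrA (addrC (- _)).
have -> : br x y = br u w + e *: (d *: u - c *: w) by rewrite comb buw subrK.
by rewrite rpredD ?subM // rpredZ // rpredB ?rpredZ.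
Qed.

(* If h is in M, a vector x of ad-h eigenvalue lam lies in M as soon as two
   nonzero vectors y, z of another eigenvalue mu commute with x and [y, z]
   is a multiple of x: otherwise y and z are pulled into M, hence so is x. *)
Lemma lower_modular_root_in M h x y z (lam mu : F) :
  maximal_in br M fullv -> lower_modular br M -> h \in M ->
  br h x = lam *: x -> br h y = mu *: y -> br h z = mu *: z -> lam != mu ->
  y != 0 -> z != 0 -> br x y = 0 -> br x z = 0 -> x \in <[br y z]>%VS -> x \in M.
Proof.
move=> maxM lmM hM hx hy hz lam_mu y0 z0 xy xz /vlineP[k xyz].
have [subM _ _ _ _] := maxM; apply/contraT => xM.
have partner w : br h w = mu *: w -> w != 0 -> br x w = 0 -> w \in M.
  move=> hw w0 xw; have := lower_modular_partner maxM lmM hM xM hx hw lam_mu w0.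
  by apply; rewrite xw mem0v.
by rewrite -(negPf xM) xyz rpredZ ?subM ?partner.
Qed.

End SubalgebraLattice.

Section Psl3Bracket.
Variable F : fieldType.
Notation br := (@psl3_br F).

Definition cproj (c : 'M[F]_3) : 'M[F]_3 := c - c mid mid *: 1.

Lemma cprojDZ a (A B : 'M[F]_3) : cproj (a *: A + B) = a *: cproj A + cproj B.
Proof. by rewrite /cproj !mxE scalerDl -scalerA scalerBr opprD addrACA. Qed.

Lemma comm3DZl a (A B C : 'M[F]_3) :
  comm3 (a *: A + B) C = a *: comm3 A C + comm3 B C.
Proof.
by rewrite /comm3 mulrDl mulrDr -scalerAl -scalerAr scalerBr opprD addrACA.
Qed.

Lemma psl3_brE x y :
  br x y = vsproj (psl3_space F) (cproj (comm3 (vsval x) (vsval y))).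
Proof. by []. Qed.

Lemma psl3_brDZl a x y z : br (a *: x + y) z = a *: br x z + br y z.
Proof. by rewrite !psl3_brE linearP /= comm3DZl cprojDZ linearP. Qed.

Lemma psl3_brC x y : br y x = - br x y.
Proof.
rewrite !psl3_brE -linearN; congr vsproj.
by rewrite /cproj /comm3 !mxE [in RHS]opprD opprK -scaleNr !opprB.
Qed.

Lemma psl3_br_alt x : br x x = 0.
Proof. by rewrite psl3_brE /comm3 subrr /cproj mxE scale0r subr0 linear0. Qed.

Lemma mem_psl3_space (A : 'M[F]_3) :
  (A \in psl3_space F) = (\tr A == 0) && (A mid mid == 0).
Proof.
pose mid_entry (B : 'M[F]_3) : F^o := B mid mid.
have mid_entry_lin : linear mid_entry by move=> k B C; rewrite /mid_entry !mxE.
pose mid_entryL : {linear 'M[F]_3 -> F^o} :=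
  HB.pack mid_entry (GRing.isLinear.Build _ _ _ _ mid_entry mid_entry_lin).
by rewrite memv_cap !memv_ker lfunE /= (lfunE mid_entryL).
Qed.

Lemma psl3_br_proj A B : A \in psl3_space F -> B \in psl3_space F ->
  br (vsproj (psl3_space F) A) (vsproj (psl3_space F) B) =
  vsproj (psl3_space F) (cproj (comm3 A B)).
Proof. by move=> memA memB; rewrite psl3_brE !vsprojK. Qed.

End Psl3Bracket.

Section Psl3Basis.
Variable F : fieldType.
Hypothesis char3 : 3%N \in [pchar F].
Notation br := (@psl3_br F).

(* Explicit indices, so that comparisons between them compute. *)
Definition o0 : 'I_3 := @Ordinal 3 0 isT.
Definition o1 : 'I_3 := @Ordinal 3 1 isT.
Definition o2 : 'I_3 := @Ordinal 3 2 isT.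

Lemma ord3P (i : 'I_3) : [\/ i = o0, i = o1 | i = o2].
Proof.
case: i => [[|[|[|//]]] p]; [apply: Or31 | apply: Or32 | apply: Or33]; exact: val_inj.
Qed.

Lemma midE : mid = o1.
Proof. by apply: val_inj; rewrite /= inordK. Qed.

Lemma sum_ord3 (g : 'I_3 -> F) : \sum_(k < 3) g k = g o0 + g o1 + g o2.
Proof.
by rewrite !big_ord_recr big_ord0 /= add0r; congr (_ + _ + _); congr g; apply: val_inj.
Qed.

Lemma two_eqN1 : 1 + 1 = -1 :> F.
Proof.
apply/eqP; rewrite -subr_eq0 opprK -(pcharf0 char3).
by rewrite -[3%N]/(1 + 1 + 1)%N !natrD.
Qed.

Lemma one_neqN1 : 1 != -1 :> F.
Proof. by rewrite -two_eqN1 eq_sym -subr_eq0 addrK oner_neq0. Qed.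

Definition elt (A : 'M[F]_3) : psl3 F := vsproj (psl3_space F) A.
Definition H : 'M[F]_3 := delta_mx o0 o0 - delta_mx o2 o2.

Definition h := elt H.
Definition a1 := elt (delta_mx o0 o1).
Definition a2 := elt (delta_mx o1 o2).
Definition a3 := elt (delta_mx o2 o0).
Definition b1 := elt (delta_mx o1 o0).
Definition b2 := elt (delta_mx o2 o1).
Definition b3 := elt (delta_mx o0 o2).

Lemma H_mem : H \in psl3_space F.
Proof.
by rewrite mem_psl3_space /mxtrace sum_ord3 midE !mxE /= !subr0 addr0 sub0r subrr eqxx.
Qed.

Lemma delta_mem i j : i != j -> delta_mx i j \in psl3_space F.
Proof.
rewrite mem_psl3_space /mxtrace sum_ord3 midE !mxE.
by case: i => [[|[|[|?]]] ?] //; case: j => [[|[|[|?]]] ?] //= _; rewrite !addr0 eqxx.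
Qed.

Lemma root_neq0 i j : i != j -> elt (delta_mx i j) != 0.
Proof.
move=> ij; apply/eqP => /(congr1 (fun x : psl3 F => vsval x i j)).
by rewrite vsprojK ?delta_mem // linear0 !mxE !eqxx => /eqP; rewrite oner_eq0.
Qed.

(* Coordinates of an element of psl_3 in the standard basis; the h-coordinate
   also accounts for the (2,2) entry since the trace vanishes. *)
Lemma psl3_decomp (x : psl3 F) : let X := vsval x in
  x = X o0 o0 *: h + X o0 o1 *: a1 + X o1 o2 *: a2 + X o2 o0 *: a3
      + X o1 o0 *: b1 + X o2 o1 *: b2 + X o0 o2 *: b3.
Proof.
move=> X; have := subvsP x; rewrite mem_psl3_space /mxtrace sum_ord3 midE -/X.
case/andP=> /eqP + /eqP mid0; rewrite mid0 addr0 addrC => /eqP.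
rewrite addr_eq0 => /eqP tr0.
apply: subvs_inj.
rewrite !linearD !linearZ /= !vsprojK ?H_mem ?delta_mem //.
apply/matrixP => i j; rewrite !mxE.
case: (ord3P i) => ->; case: (ord3P j) => -> /=;
by rewrite -/X ?mid0 ?tr0 !(mulr0, mulr1, subr0, subrr, sub0r, mulrN1, addr0, add0r).
Qed.

Lemma psl3_basis_full (M : {vspace psl3 F}) :
  h \in M -> a1 \in M -> a2 \in M -> a3 \in M -> b1 \in M -> b2 \in M -> b3 \in M ->
  M = fullv.
Proof.
move=> *; apply/vspaceP => x; rewrite memvf (psl3_decomp x).
by rewrite !rpredD ?rpredZ.
Qed.

(* Structure constants are checked entry by entry on the 3 x 3 matrices;
   the only arithmetic needed beyond ring identities is 1 + 1 = -1. *)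
Ltac psl3_bracket :=
  rewrite /h /a1 /a2 /a3 /b1 /b2 /b3 /elt ?scale1r ?scaleN1r;
  rewrite psl3_br_proj ?H_mem ?delta_mem // -?linearN -?(linear0 (vsproj _));
  congr vsproj; rewrite /cproj /comm3 /H midE;
  let i := fresh "i" in let j := fresh "j" in
  apply/matrixP; intros i j; rewrite !mxE ?sum_ord3 !mxE; revert i j;
  case=> [[|[|[|?]]] ?] //; case=> [[|[|[|?]]] ?] //=;
  rewrite ?(mul0r, mulr0, mul1r, mulr1, add0r, addr0, subr0, sub0r, oppr0, scaler0,
            scale0r, subrr, opprK) -?opprD ?two_eqN1 ?opprK //.

Lemma ad_h_a1 : br h a1 = 1 *: a1. Proof. by psl3_bracket. Qed.
Lemma ad_h_a2 : br h a2 = 1 *: a2. Proof. by psl3_bracket. Qed.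
Lemma ad_h_a3 : br h a3 = 1 *: a3. Proof. by psl3_bracket. Qed.
Lemma ad_h_b1 : br h b1 = -1 *: b1. Proof. by psl3_bracket. Qed.
Lemma ad_h_b2 : br h b2 = -1 *: b2. Proof. by psl3_bracket. Qed.
Lemma ad_h_b3 : br h b3 = -1 *: b3. Proof. by psl3_bracket. Qed.

Lemma br_a1_a2 : br a1 a2 = b3. Proof. by psl3_bracket. Qed.
Lemma br_a2_a3 : br a2 a3 = b1. Proof. by psl3_bracket. Qed.
Lemma br_a1_a3 : br a1 a3 = - b2. Proof. by psl3_bracket. Qed.
Lemma br_b1_b2 : br b1 b2 = - a3. Proof. by psl3_bracket. Qed.
Lemma br_b1_b3 : br b1 b3 = a2. Proof. by psl3_bracket. Qed.
Lemma br_b2_b3 : br b2 b3 = - a1. Proof. by psl3_bracket. Qed.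
Lemma br_a3_b3 : br a3 b3 = - h. Proof. by psl3_bracket. Qed.
Lemma br_a1_b2 : br a1 b2 = 0. Proof. by psl3_bracket. Qed.
Lemma br_a1_b3 : br a1 b3 = 0. Proof. by psl3_bracket. Qed.
Lemma br_a2_b1 : br a2 b1 = 0. Proof. by psl3_bracket. Qed.
Lemma br_a2_b3 : br a2 b3 = 0. Proof. by psl3_bracket. Qed.
Lemma br_a3_b1 : br a3 b1 = 0. Proof. by psl3_bracket. Qed.
Lemma br_a3_b2 : br a3 b2 = 0. Proof. by psl3_bracket. Qed.

Lemma a1_neq0 : a1 != 0. Proof. exact: root_neq0. Qed.
Lemma a2_neq0 : a2 != 0. Proof. exact: root_neq0. Qed.
Lemma b1_neq0 : b1 != 0. Proof. exact: root_neq0. Qed.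
Lemma b2_neq0 : b2 != 0. Proof. exact: root_neq0. Qed.
Lemma b3_neq0 : b3 != 0. Proof. exact: root_neq0. Qed.

Let root_in := lower_modular_root_in (@psl3_brDZl F) (@psl3_brC F) (@psl3_br_alt F).
Let shift := lower_modular_shift (@psl3_brDZl F) (@psl3_brC F) (@psl3_br_alt F).
Let bracket_in := same_weight_bracket (@psl3_brDZl F) (@psl3_brC F) (@psl3_br_alt F).

Lemma line_opp (x : psl3 F) : x \in <[- x]>%VS.
Proof. by apply/vlineP; exists (-1); rewrite scaleN1r opprK. Qed.

(* A lower modular maximal subalgebra cannot contain h: it would contain every
   a_i (each commutes with two b_j whose bracket is -+ a_i), hence every
   b_i = [a_j, a_k] up to sign, hence everything. *)
Lemma lower_modular_h_out (M : {vspace psl3 F}) :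
  maximal_in br M fullv -> lower_modular br M -> h \notin M.
Proof.
move=> maxM lmM; apply/negP => hM; have [subM _ _ neqM _] := maxM.
have in_root := root_in maxM lmM hM.
have a1M : a1 \in M.
  apply: in_root ad_h_a1 ad_h_b2 ad_h_b3 one_neqN1 b2_neq0 b3_neq0 br_a1_b2 br_a1_b3 _.
  by rewrite br_b2_b3 line_opp.
have a2M : a2 \in M.
  apply: in_root ad_h_a2 ad_h_b1 ad_h_b3 one_neqN1 b1_neq0 b3_neq0 br_a2_b1 br_a2_b3 _.
  by rewrite br_b1_b3 memv_line.
have a3M : a3 \in M.
  apply: in_root ad_h_a3 ad_h_b1 ad_h_b2 one_neqN1 b1_neq0 b2_neq0 br_a3_b1 br_a3_b2 _.
  by rewrite br_b1_b2 line_opp.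
have b1M : b1 \in M by rewrite -br_a2_a3 subM.
have b2M : b2 \in M by rewrite -rpredN -br_a1_a3 subM.
have b3M : b3 \in M by rewrite -br_a1_a2 subM.
by move/eqP: neqM; apply; apply: psl3_basis_full.
Qed.

(* Nor can it miss h: translates of a_1, a_2 and of b_1, b_2 lie in M, so
   b_3 = [a_1, a_2] and a_3 = -[b_1, b_2] do, and then h = -[a_3, b_3].
   (This half holds in every characteristic.) *)
Lemma lower_modular_h_in (M : {vspace psl3 F}) :
  maximal_in br M fullv -> lower_modular br M -> h \in M.
Proof.
move=> maxM lmM; apply/contraT => hM; have [subM _ _ _ _] := maxM.
have shiftM := shift maxM lmM hM.
have N1_neq0 : (-1 : F) != 0 by rewrite oppr_eq0 oner_eq0.
have [c1 a1M] := shiftM _ _ ad_h_a1 (oner_neq0 _) a1_neq0.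
have [c2 a2M] := shiftM _ _ ad_h_a2 (oner_neq0 _) a2_neq0.
have [d1 b1M] := shiftM _ _ ad_h_b1 N1_neq0 b1_neq0.
have [d2 b2M] := shiftM _ _ ad_h_b2 N1_neq0 b2_neq0.
have b3M : b3 \in M by rewrite -br_a1_a2 (bracket_in subM ad_h_a1 ad_h_a2 a1M a2M).
have a3M : a3 \in M.
  by rewrite -rpredN -br_b1_b2 (bracket_in subM ad_h_b1 ad_h_b2 b1M b2M).
by rewrite -(negPf hM) -rpredN -br_a3_b3 subM.
Qed.

End Psl3Basis.

Theorem proposition2p5 (F : fieldType) (char3 : 3%N \in [pchar F])
    (M : {vspace psl3 F}) :
  maximal_in (@psl3_br F) M fullv -> ~ semi_modular (@psl3_br F) M.
Proof.
move=> maxM [_ lmM].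
by have := lower_modular_h_out char3 maxM lmM; rewrite (lower_modular_h_in maxM lmM).
Qed.
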